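(* Let $H,K$ be $n$-Hilbert spaces, fix $a_2,\dots,a_n\in H$, $b_2,\dots,b_n\in K$, $C_1\in\mathcal{GB}(H_F)$, $C_2\in\mathcal{GB}(K_G)$. Let $\{f_i\}_{i=1}^\infty,\{e_i\}_{i=1}^\infty$ be a pair of dual $C_1$-controlled frames associated to $(a_2,\dots,a_n)$ for $H$ and $\{g_j\}_{j=1}^\infty,\{h_j\}_{j=1}^\infty$ a pair of dual $C_2$-controlled frames associated to $(b_2,\dots,b_n)$ for $K$. Suppose $U\in\mathcal{B}(H_F)$ and $V\in\mathcal{B}(K_G)$ are unitary, $C_1$ commutes with $U$ and $C_2$ commutes with $V$. Then $\Lambda=\{(U\otimes V)(f_i\otimes g_j)\}_{i,j=1}^\infty$ and $\Gamma=\{(U\otimes V)(e_i\otimes h_j)\}_{i,j=1}^\infty$ form a pair of dual $(C_1\otimes C_2)$-controlled frames associated to $(a_2\otimes b_2,\dots,a_n\otimes b_n)$ for $H\otimes K$.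
   Context: Let $n\ge2$. For a complex $n$-Hilbert space $H$ with $n$-inner product $\langle\cdot,\cdot|\cdot,\dots,\cdot\rangle_1$ and $n$-norm $\|x_1,\dots,x_n\|_1=\langle x_1,x_1|x_2,\dots,x_n\rangle_1^{1/2}$, and fixed $a_2,\dots,a_n\in H$, $F=\{a_2,\dots,a_n\}$: $\langle x,y\rangle_F=\langle x,y|a_2,\dots,a_n\rangle_1$ is a semi-inner product on $H$ inducing an inner product on $H/L_F$ ($L_F=\mathrm{span}\,F$); identifying $H/L_F$ with an algebraic complement of $L_F$, $H_F$ is its Hilbert completion, with norm written $\|f,a_2,\dots,a_n\|_1$. Likewise $K$ with $\langle\cdot,\cdot|\cdot,\dots,\cdot\rangle_2$, $G=\{b_2,\dots,b_n\}$, Hilbert space $K_G$. $H\otimes K$ carries the $n$-inner product $\langle f_1\otimes g_1,f_2\otimes g_2|f_3\otimes g_3,\dots,f_n\otimes g_n\rangle=\langle f_1,f_2|f_3,\dots,f_n\rangle_1\langle g_1,g_2|g_3,\dots,g_n\rangle_2$ and $n$-norm $\|f_1\otimes g_1,\dots,f_n\otimes g_n\|=\|f_1,\dots,f_n\|_1\|g_1,\dots,g_n\|_2$; $H_F\otimes K_G$ is the Hilbert tensor product and $(Q\otimes T)(f\otimes g)=Qf\otimes Tg$. $\mathcal{B}(\cdot)$: bounded operators; $\mathcal{GB}(\cdot)$: those with bounded inverse. For $C\in\mathcal{GB}(H_F)$, $\{f_i\}\subseteq H$ is a $C$-controlled frame associated to $(a_2,\dots,a_n)$ for $H$ if there are $0<A\le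 B<\infty$ with $A\|f,a_2,\dots,a_n\|_1^2\le\sum_i\langle f,f_i|a_2,\dots,a_n\rangle_1\langle Cf_i,f|a_2,\dots,a_n\rangle_1\le B\|f,a_2,\dots,a_n\|_1^2$ for all $f\in H_F$; $\{f_i\},\{e_i\}$ are a pair of dual $C$-controlled frames if both are $C$-controlled frames and $f=\sum_i\langle f,e_i|a_2,\dots,a_n\rangle_1Cf_i$ for all $f\in H_F$ (similarly for $K$). A family $\{\phi_{ij}\}\subseteq H\otimes K$ is a $(C_1\otimes C_2)$-controlled frame associated to $(a_2\otimes b_2,\dots,a_n\otimes b_n)$ if there are $0<A\le B<\infty$ with $A\|f\otimes g,a_2\otimes b_2,\dots\|^2\le\sum_{i,j}\langle f\otimes g,\phi_{ij}|a_2\otimes b_2,\dots,a_n\otimes b_n\rangle\langle(C_1\otimes C_2)\phi_{ij},f\otimes g|a_2\otimes b_2,\dots,a_n\otimes b_n\rangle\le B\|f\otimes g,a_2\otimes b_2,\dots\|^2$ for all $f\in H_F$, $g\in K_G$. Two such families $\{\phi_{ij}\},\{\psi_{ij}\}$ form a pair of dual $(C_1\otimes C_2)$-controlled frames if $f\otimes g=\sum_{i,j}\langle f\otimes g,\psi_{ij}|a_2\otimes b_2,\dots,a_n\otimes b_n\rangle(C_1\otimes C_2)\phi_{ij}$ for all $f\in H_F$, $g\in K_G$. *)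

From mathcomp Require Import all_boot all_order all_algebra all_fingroup.
From mathcomp Require Import complex reals.
Set Implicit Arguments. Unset Strict Implicit. Unset Printing Implicit Defensive.
Import Order.TTheory GRing.Theory Num.Theory.
Local Open Scope ring_scope.
Local Open Scope complex_scope.

Section Defs.
Variable R : realType.
Local Notation C := R[i].

Definition linop (V W : lmodType C) (T : V -> W) : Prop :=
  forall (a : C) (x y : V), T (a *: x + y) = a *: T x + T y.

Definition lin_dep (V : lmodType C) (k : nat) (x : 'I_k -> V) : Prop :=
  exists c : 'I_k -> C, (exists i, c i != 0) /\ \sum_(i < k) c i *: x i = 0.

Definition inner_product (V : lmodType C) (ip : V -> V -> C) : Prop :=
  [/\ forall (a : C) (x x' y : V), ip (a *: x + x') y = a * ip x y + ip x' y,
      forall x y, ip x y = (ip y x)^*,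
      forall x, 0 <= ip x x &
      forall x, ip x x = 0 -> x = 0].

(** norm convergence ||s k - l|| -> 0  (stated with squared norms) *)
Definition cvg_ip (V : lmodType C) (ip : V -> V -> C) (s : nat -> V) (l : V) : Prop :=
  forall e : R, 0 < e -> exists N, forall k, (N <= k)%N -> ip (s k - l) (s k - l) < e%:C.

Definition cauchy_ip (V : lmodType C) (ip : V -> V -> C) (s : nat -> V) : Prop :=
  forall e : R, 0 < e -> exists N, forall k l, (N <= k)%N -> (N <= l)%N ->
    ip (s k - s l) (s k - s l) < e%:C.

Definition hilbert (V : lmodType C) (ip : V -> V -> C) : Prop :=
  inner_product ip /\ forall s, cauchy_ip ip s -> exists l, cvg_ip ip s l.

Definition series_ip (V : lmodType C) (ip : V -> V -> C) (u : nat -> V) (l : V) : Prop :=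
  cvg_ip ip (fun N => \sum_(i < N) u i) l.

(** double series: rectangular partial sums sum_{i<N, j<M} converge
    (Pringsheim) as N, M -> oo *)
Definition series2_ip (V : lmodType C) (ip : V -> V -> C) (u : nat -> nat -> V) (l : V) : Prop :=
  forall e : R, 0 < e -> exists N0, forall N M, (N0 <= N)%N -> (N0 <= M)%N ->
    ip (\sum_(i < N) \sum_(j < M) u i j - l) (\sum_(i < N) \sum_(j < M) u i j - l) < e%:C.

Definition seriesC (u : nat -> C) (l : C) : Prop :=
  forall e : R, 0 < e -> exists N0, forall N, (N0 <= N)%N -> `|\sum_(i < N) u i - l| < e%:C.

Definition series2C (u : nat -> nat -> C) (l : C) : Prop :=
  forall e : R, 0 < e -> exists N0, forall N M, (N0 <= N)%N -> (N0 <= M)%N ->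
    `|\sum_(i < N) \sum_(j < M) u i j - l| < e%:C.

Definition bounded_op (V : lmodType C) (ip : V -> V -> C) (T : V -> V) : Prop :=
  linop T /\ exists M : R, 0 <= M /\ forall x, ip (T x) (T x) <= (M ^+ 2)%:C * ip x x.

Definition GB_op (V : lmodType C) (ip : V -> V -> C) (T : V -> V) : Prop :=
  bounded_op ip T /\
  exists Ti : V -> V, [/\ bounded_op ip Ti, cancel T Ti & cancel Ti T].

Definition is_adjoint (V : lmodType C) (ip : V -> V -> C) (T Ts : V -> V) : Prop :=
  forall x y, ip (T x) y = ip x (Ts y).

Definition unitary_op (V : lmodType C) (ip : V -> V -> C) (U : V -> V) : Prop :=
  bounded_op ip U /\
  exists Us : V -> V, [/\ is_adjoint ip U Us, cancel U Us & cancel Us U].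

(* ---------- n-inner product / n-Hilbert spaces ----------
   We write m = n - 1: an n-inner product is <x, y | z_2,...,z_n>
   with z : 'I_m -> H; a full n-tuple is x : 'I_m.+1 -> H. *)

Definition nsq (H : lmodType C) (m : nat) (ip : H -> H -> ('I_m -> H) -> C)
  (x : 'I_m.+1 -> H) : C :=
  ip (x ord0) (x ord0) (fun i => x (lift ord0 i)).

Definition n_inner_product (H : lmodType C) (m : nat)
  (ip : H -> H -> ('I_m -> H) -> C) : Prop :=
  [/\ forall x, 0 <= nsq ip x,
      forall x, nsq ip x = 0 <-> lin_dep x,
      forall x (s : 'S_m.+1), nsq ip (fun i => x (s i)) = nsq ip x,
      forall x y z, ip x y z = (ip y x z)^* &
      (forall (a : C) x y z, ip (a *: x) y z = a * ip x y z) /\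
      (forall x x' y z, ip (x + x') y z = ip x y z + ip x' y z)].

Definition n_cauchy (H : lmodType C) (m : nat) (ip : H -> H -> ('I_m -> H) -> C)
  (s : nat -> H) : Prop :=
  forall z : 'I_m -> H, forall e : R, 0 < e -> exists N, forall k l,
    (N <= k)%N -> (N <= l)%N -> ip (s k - s l) (s k - s l) z < e%:C.

Definition n_cvg (H : lmodType C) (m : nat) (ip : H -> H -> ('I_m -> H) -> C)
  (s : nat -> H) (x : H) : Prop :=
  forall z : 'I_m -> H, forall e : R, 0 < e -> exists N, forall k,
    (N <= k)%N -> ip (s k - x) (s k - x) z < e%:C.

Definition n_hilbert (H : lmodType C) (m : nat) (ip : H -> H -> ('I_m -> H) -> C) : Prop :=
  n_inner_product ip /\ forall s, n_cauchy ip s -> exists x, n_cvg ip s x.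

(** H_F: (HF, ipF) is the Hilbert completion of H / L_F with the inner product
    <x, y>_F = <x, y | a_2, ..., a_n>; jF is the canonical map
    H -> H/L_F -> H_F (isometric, dense range). *)
Definition completion_F (H : lmodType C) (m : nat) (ip : H -> H -> ('I_m -> H) -> C)
  (a : 'I_m -> H) (HF : lmodType C) (ipF : HF -> HF -> C) (jF : H -> HF) : Prop :=
  [/\ hilbert ipF, linop jF,
      forall x y, ipF (jF x) (jF y) = ip x y a &
      forall (y : HF) (e : R), 0 < e -> exists x, ipF (jF x - y) (jF x - y) < e%:C].

(** (T, ipT, tn) is the Hilbert tensor product HF (x) KG, tn u v = u (x) v *)
Definition hilbert_tensor (HF KG T : lmodType C) (ipF : HF -> HF -> C)
  (ipG : KG -> KG -> C) (ipT : T -> T -> C) (tn : HF -> KG -> T) : Prop :=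
  [/\ hilbert ipT,
      forall v, linop (fun u => tn u v),
      forall u, linop (tn u),
      forall u v u' v', ipT (tn u v) (tn u' v') = ipF u u' * ipG v v' &
      forall (t : T) (e : R), 0 < e -> exists k (us : 'I_k -> HF) (vs : 'I_k -> KG),
        ipT (\sum_(i < k) tn (us i) (vs i) - t) (\sum_(i < k) tn (us i) (vs i) - t) < e%:C].

Definition tensor_op (HF KG T : lmodType C) (ipT : T -> T -> C) (tn : HF -> KG -> T)
  (Q : HF -> HF) (S : KG -> KG) (QS : T -> T) : Prop :=
  bounded_op ipT QS /\ forall u v, QS (tn u v) = tn (Q u) (S v).

(** {f_i} is a Cop-controlled frame associated to (a_2,...,a_n) for H;
    here ||x, a_2,...,a_n||^2 = ipF x x and <x, f_i | a> = ipF x (jF (f i)). *)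
Definition ctrl_frame (H HF : lmodType C) (ipF : HF -> HF -> C) (jF : H -> HF)
  (Cop : HF -> HF) (f : nat -> H) : Prop :=
  exists A B : R, [/\ 0 < A, A <= B &
    forall x : HF, exists s : C,
      [/\ seriesC (fun i => ipF x (jF (f i)) * ipF (Cop (jF (f i))) x) s,
          A%:C * ipF x x <= s & s <= B%:C * ipF x x]].

Definition dual_ctrl_frames (H HF : lmodType C) (ipF : HF -> HF -> C) (jF : H -> HF)
  (Cop : HF -> HF) (f e : nat -> H) : Prop :=
  [/\ ctrl_frame ipF jF Cop f, ctrl_frame ipF jF Cop e &
      forall x : HF, series_ip ipF (fun i => ipF x (jF (e i)) *: Cop (jF (f i))) x].

(** {phi_ij} is a CT-controlled frame (CT = C1 (x) C2) associated to
    (a_2 (x) b_2, ..., a_n (x) b_n): tested on x (x) y, x in H_F, y in K_G. *)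
Definition tensor_ctrl_frame (HF KG T : lmodType C) (ipT : T -> T -> C)
  (tn : HF -> KG -> T) (CT : T -> T) (phi : nat -> nat -> T) : Prop :=
  exists A B : R, [/\ 0 < A, A <= B &
    forall (x : HF) (y : KG), exists s : C,
      [/\ series2C (fun i j => ipT (tn x y) (phi i j) * ipT (CT (phi i j)) (tn x y)) s,
          A%:C * ipT (tn x y) (tn x y) <= s & s <= B%:C * ipT (tn x y) (tn x y)]].

Definition tensor_dual_ctrl_frames (HF KG T : lmodType C) (ipT : T -> T -> C)
  (tn : HF -> KG -> T) (CT : T -> T) (phi psi : nat -> nat -> T) : Prop :=
  [/\ tensor_ctrl_frame ipT tn CT phi, tensor_ctrl_frame ipT tn CT psi &
      forall (x : HF) (y : KG),
        series2_ip ipT (fun i j => ipT (tn x y) (psi i j) *: CT (phi i j)) (tn x y)].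

End Defs.

From mathcomp Require Import all_boot all_order all_algebra all_fingroup.
From mathcomp Require Import complex reals.
From mathcomp Require Import ring lra.
Import Order.TTheory GRing.Theory Num.Theory.
Set Implicit Arguments. Unset Strict Implicit.
Local Open Scope ring_scope.
Local Open Scope complex_scope.

(* A unitary U commuting with the controlling operator C transports a dual
   pair of C-controlled frames {f_i}, {e_i} to the dual pair {U f_i}, {U e_i}:
   since <x, U f_i> = <U* x, f_i> and C U = U C, the frame series of x is the
   frame series of U* x, which has the same norm, and the reconstruction
   series of x is the image under U of the one of U* x.  On H_F (x) K_G the
   frame series of x (x) y factors term by term as the product of the frame
   series of x and of y, and the reconstruction series of x (x) y is the
   tensor product of the two reconstruction series; both converge in the
   rectangular sense by Cauchy-product estimates. *)

Section ComplexScalars.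
Variable R : realType.
Local Notation C := R[i].

Lemma complex_ge0P (z : C) : 0 <= z -> exists2 r : R, 0 <= r & z = r%:C.
Proof.
move=> z0; have zRe := RRe_real (ger0_real z0).
by exists (complex.Re z); rewrite ?zRe // -ler0c zRe.
Qed.

Lemma exists_tolerance (e K : R) : 0 < e -> 0 < K ->
  exists d : R, [/\ 0 < d, d <= 1 & d * K <= e].
Proof.
move=> e0 K0; exists (Order.min 1 (e / K)); split.
- by rewrite lt_min ltr01 divr_gt0.
- by rewrite ge_min lexx.
- by rewrite -ler_pdivlMr // ge_min lexx orbT.
Qed.

Section InnerProduct.
Variables (V : lmodType C) (ip : V -> V -> C).
Hypothesis hip : inner_product ip.

Lemma ip0l y : ip 0 y = 0.
Proof.
case: hip => hl _ _ _.
have := hl 1 0 0 y; rewrite scale1r addr0 mul1r => E.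
by apply: (addrI (ip 0 y)); rewrite addr0 -E.
Qed.

Lemma ipDl x x' y : ip (x + x') y = ip x y + ip x' y.
Proof. by case: hip => hl _ _ _; rewrite -[x in LHS]scale1r hl mul1r. Qed.

Lemma ipZl a x y : ip (a *: x) y = a * ip x y.
Proof. by case: hip => hl _ _ _; rewrite -[_ *: x]addr0 hl ip0l addr0. Qed.

Lemma ipNl x y : ip (- x) y = - ip x y.
Proof. by rewrite -scaleN1r ipZl mulN1r. Qed.

Lemma ipC x y : ip x y = (ip y x)^*.
Proof. by case: hip. Qed.

Lemma ipDr x y y' : ip x (y + y') = ip x y + ip x y'.
Proof. by rewrite ipC ipDl rmorphD /= -!ipC. Qed.

Lemma ipNr x y : ip x (- y) = - ip x y.
Proof. by rewrite ipC ipNl rmorphN /= -ipC. Qed.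

Lemma ip_ge0 x : 0 <= ip x x.
Proof. by case: hip. Qed.

Lemma ip_sqrD_le x y : ip (x + y) (x + y) <= 2 * (ip x x + ip y y).
Proof.
rewrite -subr_ge0.
have -> : 2 * (ip x x + ip y y) - ip (x + y) (x + y) = ip (x - y) (x - y).
  by rewrite !ipDl !ipNl !ipDr !ipNr; ring.
exact: ip_ge0.
Qed.

End InnerProduct.

Section LinearMap.
Variables (V W : lmodType C) (L : V -> W).
Hypothesis hL : linop L.

Lemma linop0 : L 0 = 0.
Proof.
have := hL 1 0 0; rewrite !scale1r addr0 => E.
by apply: (addrI (L 0)); rewrite addr0 -E.
Qed.

Lemma linopD x y : L (x + y) = L x + L y.
Proof. by rewrite -[x in LHS]scale1r hL scale1r. Qed.

Lemma linopZ a x : L (a *: x) = a *: L x.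
Proof. by rewrite -[_ *: x]addr0 hL linop0 addr0. Qed.

Lemma linopB x y : L (x - y) = L x - L y.
Proof. by rewrite linopD -scaleN1r linopZ scaleN1r. Qed.

Lemma linop_sum N (F : 'I_N -> V) : L (\sum_(i < N) F i) = \sum_(i < N) L (F i).
Proof.
elim: N F => [|N IH] F; first by rewrite !big_ord0 linop0.
by rewrite !big_ord_recr /= linopD IH.
Qed.

End LinearMap.

Section Series.

Lemma eq_seriesC (u u' : nat -> C) s :
  (forall i, u i = u' i) -> seriesC u s -> seriesC u' s.
Proof.
move=> E hu eps eps0; have [N hN] := hu eps eps0; exists N => N' hN'.
by rewrite (eq_bigr (fun i : 'I_N' => u i)) ?hN // => i _; rewrite E.
Qed.

Lemma eq_series2C (u u' : nat -> nat -> C) s :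
  (forall i j, u i j = u' i j) -> series2C u s -> series2C u' s.
Proof.
move=> E hu eps eps0; have [N hN] := hu eps eps0; exists N => N' M h1 h2.
rewrite (eq_bigr (fun i : 'I_N' => \sum_(j < M) u i j)); first exact: hN.
by move=> i _; apply: eq_bigr => j _; rewrite E.
Qed.

Variables (V : lmodType C) (ip : V -> V -> C).

Lemma eq_series_ip (u u' : nat -> V) l :
  (forall i, u i = u' i) -> series_ip ip u l -> series_ip ip u' l.
Proof.
move=> E hu eps eps0; have [N hN] := hu eps eps0; exists N => N' hN'.
by rewrite (eq_bigr (fun i : 'I_N' => u i)) ?hN // => i _; rewrite E.
Qed.

Lemma eq_series2_ip (u u' : nat -> nat -> V) l :
  (forall i j, u i j = u' i j) -> series2_ip ip u l -> series2_ip ip u' l.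
Proof.
move=> E hu eps eps0; have [N hN] := hu eps eps0; exists N => N' M h1 h2.
rewrite (eq_bigr (fun i : 'I_N' => \sum_(j < M) u i j)); first exact: hN.
by move=> i _; apply: eq_bigr => j _; rewrite E.
Qed.

Lemma series2C_mul (a b : nat -> C) s t :
  seriesC a s -> seriesC b t -> series2C (fun i j => a i * b j) (s * t).
Proof.
move=> ha hb eps eps0.
have [rs rs0 Hs] := complex_ge0P (normr_ge0 s).
have [rt rt0 Ht] := complex_ge0P (normr_ge0 t).
have [d [d0 d1 dK]] := @exists_tolerance (eps / 2) (1 + rs + rt) ltac:(lra) ltac:(lra).
have [N1 h1] := ha d d0; have [N2 h2] := hb d d0.
exists (maxn N1 N2) => N M hN hM.
have hA := h1 N (leq_trans (leq_maxl _ _) hN).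
have hB := h2 M (leq_trans (leq_maxr _ _) hM).
rewrite (eq_bigr (fun i : 'I_N => a i * \sum_(j < M) b j)); last first.
  by move=> i _; rewrite mulr_sumr.
rewrite -mulr_suml.
set A := \sum_(i < N) a i in hA *; set B := \sum_(j < M) b j in hB *.
have -> : A * B - s * t = (A - s) * (B - t) + ((A - s) * t + s * (B - t)) by ring.
apply: (le_lt_trans (ler_normD _ _)); rewrite normrM.
apply: (le_lt_trans (lerD (lexx _) (ler_normD _ _))); rewrite !normrM Hs Ht.
apply: (@le_lt_trans _ _ (d%:C * d%:C + (d%:C * rt%:C + rs%:C * d%:C))).
  apply: lerD; first by apply: ler_pM => //; apply: ltW.
  by apply: lerD; (apply: ler_pM => //; [rewrite ler0c | exact: ltW]).
rewrite -!rmorphM -!rmorphD /= ltcR; nra.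
Qed.

End Series.

Section Unitary.
Variables (V : lmodType C) (ip : V -> V -> C).
Hypothesis hip : inner_product ip.
Variables U Us : V -> V.
Hypothesis hUlin : linop U.
Hypothesis hadj : is_adjoint ip U Us.
Hypotheses (hUK : cancel U Us) (hUsK : cancel Us U).

Lemma ipUr x y : ip x (U y) = ip (Us x) y.
Proof. by rewrite (ipC hip) hadj -(ipC hip). Qed.

Lemma ipU x : ip (U x) (U x) = ip x x.
Proof. by rewrite hadj hUK. Qed.

Lemma ipUs x : ip (Us x) (Us x) = ip x x.
Proof. by rewrite -hadj hUsK. Qed.

Lemma series_ip_unitary (u : nat -> V) l :
  series_ip ip u l -> series_ip ip (fun i => U (u i)) (U l).
Proof.
move=> hu eps eps0; have [N hN] := hu eps eps0; exists N => N' hN'.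
by rewrite -linop_sum // -linopB // ipU; apply: hN.
Qed.

Variable Cop : V -> V.
Hypothesis hCU : forall x, Cop (U x) = U (Cop x).

Lemma ctrl_frame_unitary (H : lmodType C) (j : H -> V) (f : nat -> H) :
  ctrl_frame ip j Cop f -> ctrl_frame ip (U \o j) Cop f.
Proof.
case=> A [B [A0 AB hf]]; exists A, B; split=> // x.
have [s [hs lo hi]] := hf (Us x); exists s; rewrite -ipUs; split=> //.
by apply: eq_seriesC hs => i /=; rewrite hCU ipUr hadj.
Qed.

Lemma dual_ctrl_frames_unitary (H : lmodType C) (j : H -> V) (f e : nat -> H) :
  dual_ctrl_frames ip j Cop f e -> dual_ctrl_frames ip (U \o j) Cop f e.
Proof.
case=> hf he hrec; split; try exact: ctrl_frame_unitary.
move=> x; rewrite -[x in series_ip _ _ x]hUsK.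
apply: eq_series_ip (series_ip_unitary (hrec (Us x))) => i /=.
by rewrite hCU ipUr linopZ.
Qed.

End Unitary.

Section Tensor.
Variables (HF KG T : lmodType C).
Variables (ipF : HF -> HF -> C) (ipG : KG -> KG -> C) (ipT : T -> T -> C).
Variable tn : HF -> KG -> T.
Hypotheses (hipF : inner_product ipF) (hipG : inner_product ipG).
Hypothesis hT : hilbert_tensor ipF ipG ipT tn.

Lemma ipT_tn u v u' v' : ipT (tn u v) (tn u' v') = ipF u u' * ipG v v'.
Proof. by case: hT. Qed.

Lemma tnZl a u v : tn (a *: u) v = a *: tn u v.
Proof. by case: hT => _ hl _ _ _; rewrite (linopZ (hl v)). Qed.

Lemma tnZr a u v : tn u (a *: v) = a *: tn u v.
Proof. by case: hT => _ _ hr _ _; rewrite (linopZ (hr u)). Qed.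

Lemma tnBl u u' v : tn (u - u') v = tn u v - tn u' v.
Proof. by case: hT => _ hl _ _ _; rewrite (linopB (hl v)). Qed.

Lemma tnBr u v v' : tn u (v - v') = tn u v - tn u v'.
Proof. by case: hT => _ _ hr _ _; rewrite (linopB (hr u)). Qed.

Lemma tn_sum N M (P : 'I_N -> HF) (Q : 'I_M -> KG) :
  tn (\sum_(i < N) P i) (\sum_(j < M) Q j) = \sum_(i < N) \sum_(j < M) tn (P i) (Q j).
Proof.
case: hT => _ hl hr _ _.
rewrite (linop_sum (hl _)); apply: eq_bigr => i _; exact: linop_sum.
Qed.

Lemma series2_ip_tensor (P : nat -> HF) (Q : nat -> KG) x y :
  series_ip ipF P x -> series_ip ipG Q y ->
  series2_ip ipT (fun i j => tn (P i) (Q j)) (tn x y).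
Proof.
move=> hP hQ eps eps0.
have hipT : inner_product ipT by case: hT => [[]].
have [rx rx0 Hx] := complex_ge0P (ip_ge0 hipF x).
have [ry ry0 Hy] := complex_ge0P (ip_ge0 hipG y).
have [d [d0 d1 dK]] := @exists_tolerance eps (2 * rx + 4 * ry + 5) eps0 ltac:(lra).
have [N1 h1] := hP d d0; have [N2 h2] := hQ d d0.
exists (maxn N1 N2) => N M hN hM.
have hA := h1 N (leq_trans (leq_maxl _ _) hN).
have hB := h2 M (leq_trans (leq_maxr _ _) hM).
rewrite -tn_sum; move: hA hB.
set SP := \sum_(i < N) P i; set SQ := \sum_(j < M) Q j => hA hB.
have -> : tn SP SQ - tn x y = tn x (SQ - y) + tn (SP - x) SQ.
  by rewrite tnBr tnBl [RHS]addrC addrA subrK.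
apply: le_lt_trans (ip_sqrD_le hipT _ _) _; rewrite !ipT_tn.
have hSQ : ipG SQ SQ <= 2 * (ry%:C + d%:C).
  rewrite -[SQ](subrK y) addrC; apply: le_trans (ip_sqrD_le hipG _ _) _.
  by apply: ler_wpM2l => //; apply: lerD; [rewrite Hy | exact: ltW].
apply: (@le_lt_trans _ _ (2 * (rx%:C * d%:C + d%:C * (2 * (ry%:C + d%:C))))).
  apply: ler_wpM2l => //; apply: lerD.
    by rewrite Hx; apply: ler_wpM2l; [rewrite ler0c | exact: ltW].
  by apply: ler_pM; [exact: ip_ge0 | exact: ip_ge0 | exact: ltW | exact: hSQ].
rewrite -(rmorph_nat (real_complex R) 2).
rewrite -!rmorphD -!rmorphM -?rmorphD -?rmorphM -?rmorphD -?rmorphM /= ltcR.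
nra.
Qed.

Variables (C1 : HF -> HF) (C2 : KG -> KG) (C12 : T -> T).
Hypothesis hC12 : tensor_op ipT tn C1 C2 C12.

Lemma ctrl_frame_tensor (H K : lmodType C) (jF : H -> HF) (jG : K -> KG) f g :
  ctrl_frame ipF jF C1 f -> ctrl_frame ipG jG C2 g ->
  tensor_ctrl_frame ipT tn C12 (fun i j => tn (jF (f i)) (jG (g j))).
Proof.
case=> A1 [B1 [A10 AB1 h1]]; case=> A2 [B2 [A20 AB2 h2]].
exists (A1 * A2), (B1 * B2); split; first exact: mulr_gt0.
  by apply: ler_pM => //; apply: ltW.
move=> x y; have [s1 [hs1 lo1 hi1]] := h1 x; have [s2 [hs2 lo2 hi2]] := h2 y.
have lower_ge0 A (ipx : C) : 0 < A -> 0 <= ipx -> 0 <= A%:C * ipx.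
  by move=> A0 ipx0; rewrite mulr_ge0 // ler0c ltW.
exists (s1 * s2); split.
- apply: eq_series2C (series2C_mul hs1 hs2) => i j /=.
  by rewrite hC12.2 !ipT_tn mulrACA.
- rewrite ipT_tn rmorphM mulrACA.
  by apply: ler_pM => //; apply: lower_ge0 => //; exact: ip_ge0.
- rewrite ipT_tn rmorphM mulrACA.
  apply: ler_pM => //; [apply: le_trans _ lo1 | apply: le_trans _ lo2];
    by apply: lower_ge0 => //; exact: ip_ge0.
Qed.

Lemma dual_ctrl_frames_tensor (H K : lmodType C) (jF : H -> HF) (jG : K -> KG)
    f e g h :
  dual_ctrl_frames ipF jF C1 f e -> dual_ctrl_frames ipG jG C2 g h ->
  tensor_dual_ctrl_frames ipT tn C12
    (fun i j => tn (jF (f i)) (jG (g j))) (fun i j => tn (jF (e i)) (jG (h j))).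
Proof.
case=> hf he recF; case=> hg hh recG.
split; try exact: ctrl_frame_tensor.
move=> x y; apply: eq_series2_ip (series2_ip_tensor (recF x) (recG y)) => i j /=.
by rewrite hC12.2 ipT_tn tnZl tnZr scalerA.
Qed.

End Tensor.

End ComplexScalars.

Unset Implicit Arguments.
Set Strict Implicit.

Theorem theorem4p12 (R : realType) (n : nat) (Hn : (2 <= n)%N)
  (H K : lmodType R[i])
  (ipH : H -> H -> ('I_n.-1 -> H) -> R[i]) (ipK : K -> K -> ('I_n.-1 -> K) -> R[i])
  (hH : n_hilbert ipH) (hK : n_hilbert ipK)
  (a : 'I_n.-1 -> H) (b : 'I_n.-1 -> K)
  (HF : lmodType R[i]) (ipF : HF -> HF -> R[i]) (jF : H -> HF)
  (hHF : completion_F ipH a ipF jF)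
  (KG : lmodType R[i]) (ipG : KG -> KG -> R[i]) (jG : K -> KG)
  (hKG : completion_F ipK b ipG jG)
  (T : lmodType R[i]) (ipT : T -> T -> R[i]) (tn : HF -> KG -> T)
  (hT : hilbert_tensor ipF ipG ipT tn)
  (C1 : HF -> HF) (C2 : KG -> KG) (hC1 : GB_op ipF C1) (hC2 : GB_op ipG C2)
  (C12 : T -> T) (hC12 : tensor_op ipT tn C1 C2 C12)
  (f e : nat -> H) (g h : nat -> K)
  (hfe : dual_ctrl_frames ipF jF C1 f e)
  (hgh : dual_ctrl_frames ipG jG C2 g h)
  (U : HF -> HF) (V : KG -> KG)
  (hU : unitary_op ipF U) (hV : unitary_op ipG V)
  (hC1U : forall x, C1 (U x) = U (C1 x)) (hC2V : forall y, C2 (V y) = V (C2 y)) :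
  tensor_dual_ctrl_frames ipT tn C12
    (fun i j => tn (U (jF (f i))) (V (jG (g j))))
    (fun i j => tn (U (jF (e i))) (V (jG (h j)))).
Proof.
have hipF : inner_product ipF by case: hHF => [[]].
have hipG : inner_product ipG by case: hKG => [[]].
case: hU => [[hUlin _] [Us [hadjU hUK hUsK]]].
case: hV => [[hVlin _] [Vs [hadjV hVK hVsK]]].
exact: (dual_ctrl_frames_tensor hipF hipG hT hC12
  (dual_ctrl_frames_unitary hipF hUlin hadjU hUK hUsK hC1U hfe)
  (dual_ctrl_frames_unitary hipG hVlin hadjV hVK hVsK hC2V hgh)).
Qed.
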